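(* Let $s\ge 2$ be an even constant and $\epsilon$ a constant with $0<\epsilon<1/(2s-1)$. The $(1+1)$~IA$^{hyp}$ finds an optimal solution of any instance of the class $G^*_\epsilon$ (with $n$ even) in $O(n^2)$ expected fitness function evaluations.
   Context: Partition problem: an instance consists of $n$ jobs with positive processing times $p_1,\dots,p_n$. A solution is $x\in\{0,1\}^n$ (job $i$ on machine $M_1$ if $x_i=0$, on $M_2$ if $x_i=1$), with makespan $f(x)=\max\{\sum_i p_ix_i,\sum_i p_i(1-x_i)\}$ to be minimised. The class $G^*_\epsilon$: instances with an even number $n$ of jobs, an even number $s=\Theta(1)$ of large jobs, and processing times $p_i=\frac{1}{2s-1}-\frac{\epsilon}{2s}$ for $i\le s$ and $p_i=\frac{s-1}{n-s}\left(\frac{1}{2s-1}+\frac{\epsilon}{2(s-1)}\right)$ for $s<i\le n$, where $0<\epsilon<1/(2s-1)$ is an arbitrarily small constant. The $(1+1)$~IA$^{hyp}$ (minimisation): initialise $x$ uniformly at random and evaluate it. In each iteration: $y:=x$, $F:=\{1,\dots,n\}$; while $F\ne\emptyset$ and $f(y)\ge f(x)$: pick $i\in F$ uniformly at random, remove it from $F$, flip $y_i$, evaluate $f(y)$. Then if $f(y)\le f(x)$ set $x:=y$. Asymptotics are as $n\to\infty$. *)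

From HB Require Import structures.
From mathcomp Require Import all_boot all_order all_algebra all_fingroup.
From mathcomp Require Import reals.
Set Implicit Arguments. Unset Strict Implicit. Unset Printing Implicit Defensive.
Import Order.TTheory GRing.Theory Num.Theory.
Local Open Scope ring_scope.

(* Processing times of the class G*_eps (jobs indexed 0..n-1; job i is one of
   the s large jobs iff i < s, i.e. paper index i+1 <= s). *)
Definition ptime {R : realType} (n s : nat) (eps : R) (i : 'I_n) : R :=
  if (i < s)%N then 1 / (2 * s%:R - 1) - eps / (2 * s%:R)
  else (s%:R - 1) / (n%:R - s%:R) * (1 / (2 * s%:R - 1) + eps / (2 * (s%:R - 1))).

Arguments ptime {R} n s eps i.

(* x i = true  <->  job i on M2. *)
Definition makespan {R : realType} {n : nat} (p : 'I_n -> R)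
  (x : {ffun 'I_n -> bool}) : R :=
  Num.max (\sum_(i | x i) p i) (\sum_(i | ~~ x i) p i).

Definition is_optimal {R : realType} {n : nat} (f : {ffun 'I_n -> bool} -> R)
  (x : {ffun 'I_n -> bool}) : bool := [forall y, f x <= f y].

(* The hypermutation picks positions uniformly without replacement; this is
   modelled by a uniform random permutation sigma: the k-th picked position is
   sigma (k-1). *)
Definition flipped {n : nat} (x : {ffun 'I_n -> bool}) (sigma : {perm 'I_n})
  (k : nat) : {ffun 'I_n -> bool} :=
  [ffun i => x i (+) ((sigma^-1)%g i < k)%N].

(* Number of evaluations performed by the hypermutation: the first k in
   1..n with f(y_k) < f(x), or n if there is none. *)
Definition stop_index {R : realType} {n : nat} (f : {ffun 'I_n -> bool} -> R)
  (x : {ffun 'I_n -> bool}) (sigma : {perm 'I_n}) : nat :=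
  let ks := iota 1 n in
  nth n ks (find (fun k => f (flipped x sigma k) < f x) ks).

Definition hyp_next {R : realType} {n : nat} (f : {ffun 'I_n -> bool} -> R)
  (x : {ffun 'I_n -> bool}) (sigma : {perm 'I_n}) : {ffun 'I_n -> bool} :=
  let y := flipped x sigma (stop_index f x sigma) in
  if f y <= f x then y else x.

(* Expected number of fitness evaluations, counted within the first k
   iterations, until the current solution is optimal, starting from x.
   Its supremum over k is the expected optimisation time from x. *)
Fixpoint trunc_time {R : realType} {n : nat} (f : {ffun 'I_n -> bool} -> R)
  (k : nat) (x : {ffun 'I_n -> bool}) : R :=
  match k with
  | 0 => 0
  | k'.+1 =>
    if is_optimal f x then 0
    else (#|{perm 'I_n}|%:R)^-1 *
         \sum_(sigma : {perm 'I_n})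
            ((stop_index f x sigma)%:R + trunc_time f k' (hyp_next f x sigma))
  end.

(* Including the initial evaluation of the uniformly random initial x. *)
Definition expected_time_trunc {R : realType} {n : nat}
  (f : {ffun 'I_n -> bool} -> R) (k : nat) : R :=
  1 + ((2 ^ n)%:R)^-1 * \sum_(x : {ffun 'I_n -> bool}) trunc_time f k x.

(* Fitness never increases and the makespan depends only on how many large and
   small jobs lie on M2, so there are at most (s+1)(n-s+1) fitness levels.  It
   therefore suffices that from every non-optimal solution one iteration, which
   costs at most n evaluations, improves with probability at least (8s)^-s.
   By symmetry let M2 carry the excess d = 2 load(M2) - 1 > 0.
   - If d exceeds a large job, the first prefix of flips that moves a positive
     net load off M2 overshoots by at most one job, so every permutation improves.
   - If the small jobs are unbalanced by at least m = n/(4s), the permutations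
     that flip the surplus large jobs within the first m steps and the other large
     jobs within the last m steps have probability at least (8s)^-s; in between,
     the load moves in steps of one small job and hits perfect balance.
   - Otherwise the large jobs are balanced, and flipping first a small job of M2,
     which happens with probability at least 1/4, improves. *)

From HB Require Import structures.
From mathcomp Require Import all_boot all_order all_algebra all_fingroup.
From mathcomp Require Import reals.
From mathcomp.algebra_tactics Require Import ring lra.
From mathcomp Require Import zify.
Import Order.TTheory GRing.Theory Num.Theory.

Set Implicit Arguments. Unset Strict Implicit. Unset Printing Implicit Defensive.

Lemma card_perms (T : finType) : #|{perm T}| = #|T|`!.
Proof.
rewrite -cardsT -card_perm; apply: eq_card => sg.
by rewrite !inE; apply/esym/subsetP => i; rewrite inE.
Qed.

Section ConstrainedPerms.
Variables (T : finType) (Y : T -> {set T}).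

(* Reading [sg] as a flip order (see [flipped]), [sg^-1 e] is the step at which [e] is flipped. *)
Definition constrained_perms (es : seq T) : {set {perm T}} :=
  [set sg : {perm T} | all (fun e => (sg^-1)%g e \in Y e) es].

Lemma card_constrained_perms_cons e es : uniq (e :: es) ->
  #|constrained_perms es| * (#|Y e| - size es) <= #|constrained_perms (e :: es)| * #|T|.
Proof.
move=> /= /andP [e_notin_es _].
pose free (sg : {perm T}) := Y e :\: [set (sg^-1)%g e' | e' in es].
pose D := [set pp : {perm T} * T | (pp.1 \in constrained_perms es) && (pp.2 \in free pp.1)].
have card_D : #|constrained_perms es| * (#|Y e| - size es) <= #|D|.
  rewrite -sum_nat_const -[#|D|]sum1_card.
  have -> : \sum_(pp in D) 1 =
      \sum_(pp | (pp.1 \in constrained_perms es) && (pp.2 \in free pp.1)) 1.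
    by apply: eq_bigl => pp; rewrite inE.
  rewrite -(pair_big_dep (mem (constrained_perms es)) (fun sg t => t \in free sg)
    (fun _ _ => 1)) /=.
  apply: leq_sum => sg _; rewrite sum1_card cardsD leq_sub2l //.
  apply: leq_trans (subset_leq_card (subsetIr _ _)) _.
  exact: leq_trans (leq_imset_card _ _) (card_size _).
(* Move [e] to the free step [t]; recording the old step of [e] makes this injective. *)
pose swap (pp : {perm T} * T) := ((tperm ((pp.1^-1)%g e) pp.2 * pp.1)%g, (pp.1^-1)%g e).
have swap_inj : {in D &, injective swap}.
  move=> [s1 t1] [s2 t2] _ _ [] /= eq12 pos12.
  have t12 : t1 = t2.
    have := congr1 (fun g : {perm T} => (g^-1)%g e) eq12 => /=.
    by rewrite !invMg !permM !tpermV !tpermL.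
  by move: eq12; rewrite pos12 t12 => /mulgI ->.
have swap_D : swap @: D \subset setX (constrained_perms (e :: es)) [set: T].
  apply/subsetP => _ /imsetP [[sg t] + ->].
  rewrite !inE /= => /andP [/allP sg_es /andP [t_free t_Y]]; rewrite andbT.
  rewrite invMg tpermV permM tpermL t_Y /=.
  apply/allP => e' e'_es; rewrite permM tpermD; first exact: sg_es.
    by apply: contra e_notin_es => /eqP /(congr1 sg); rewrite !permKV => ->.
  apply: contra t_free => /eqP ->; exact: imset_f.
apply: leq_trans card_D _; rewrite -(card_in_imset swap_inj).
by apply: leq_trans (subset_leq_card swap_D) _; rewrite cardsX cardsT.
Qed.

Lemma card_constrained_perms es m : uniq es -> (forall e, e \in es -> m <= #|Y e|) ->
  #|T|`! * (m.+1 - size es) ^ size es <= #|constrained_perms es| * #|T| ^ size es.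
Proof.
elim: es => [|e es IH] /= => [_ _|/andP [e_notin_es uniq_es] Y_ge].
  by rewrite !muln1 -card_perms; apply/subset_leq_card/subsetP => sg; rewrite inE.
have IH' := IH uniq_es (fun e' e'_es => Y_ge e' (mem_behead (s := e :: es) e'_es)).
have step := card_constrained_perms_cons (e := e) (es := es).
rewrite /= e_notin_es uniq_es in step; have {}step := step isT.
have Y_e := Y_ge e (mem_head e es).
apply: (@leq_trans (#|T|`! * (m.+1 - size es) ^ size es * (m - size es))).
  rewrite subSS expnSr mulnA leq_mul2r leq_mul2l; apply/orP; right; apply/orP; right.
  by case: (size es) => // k; rewrite leq_exp2r // leq_sub2r.
apply: (@leq_trans (#|constrained_perms es| * #|T| ^ size es * (m - size es))).
  by rewrite leq_mul2r IH' orbT.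
rewrite mulnAC expnS mulnCA mulnA leq_mul2r; apply/orP; right.
rewrite [#|T| * _]mulnC; apply: leq_trans step.
by rewrite leq_mul2l leq_sub2r ?orbT.
Qed.

End ConstrainedPerms.

Lemma card_perms_first_in (T : finType) (t0 : T) (A : {set T}) :
  #|A| * #|T|`! <= #|[set sg : {perm T} | sg t0 \in A]| * #|T|.
Proof.
have per_target e : #|T|`! <= #|[set sg : {perm T} | sg t0 == e]| * #|T|.
  have := @card_constrained_perms _ (fun _ => [set t0]) [:: e] 1 isT.
  rewrite cards1 /= muln1 expn1 => /(_ (fun _ _ => leqnn 1)).
  congr (_ <= _ * _); apply: eq_card => sg; rewrite !inE /= andbT inE.
  by apply/eqP/eqP => [<- | <-]; rewrite ?permKV ?permK.
rewrite -[#|[set sg | _]|]sum1_card.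
rewrite (partition_big (fun sg : {perm T} => sg t0) (mem A)) => [|sg]; last by rewrite inE.
rewrite big_distrl /= -sum_nat_const; apply: leq_sum => e e_A.
apply: leq_trans (per_target e) _; rewrite leq_mul2r -sum1_card; apply/orP; right.
by apply/eq_leq/eq_bigl => sg; rewrite !inE; case: eqP => [->|]; rewrite ?e_A ?andbF.
Qed.

Lemma card_ord_lt n m : m <= n -> #|[set i : 'I_n | i < m]| = m.
Proof.
move=> le_mn; rewrite -sum1_card (eq_bigl (fun i : 'I_n => i < m)) => [|i]; last by rewrite inE.
by rewrite (big_ord_narrow le_mn) big_const_ord iter_addn_0 mul1n.
Qed.

Lemma card_ord_ge n m : m <= n -> #|[set i : 'I_n | n - m <= i]| = m.
Proof.
move=> le_mn; have := cardsC [set i : 'I_n | i < n - m].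
rewrite card_ord_lt ?leq_subr // card_ord.
have -> : ~: [set i : 'I_n | i < n - m] = [set i : 'I_n | n - m <= i].
  by apply/setP => i; rewrite !inE -leqNgt.
lia.
Qed.

Lemma exists_subset_card (T : finType) (B : {set T}) k : k <= #|B| ->
  exists2 A : {set T}, A \subset B & #|A| = k.
Proof.
move=> le_kB; exists [set x in take k (enum B)].
  by apply/subsetP => x; rewrite inE => /mem_take; rewrite mem_enum.
rewrite cardsE; move/card_uniqP: (take_uniq k (enum_uniq (mem B))) => ->.
by rewrite size_takel // -cardE.
Qed.

Local Open Scope ring_scope.

Lemma first_positive_le_step (R : realDomainType) (v : nat -> R) m (d : R) :
  v 0%N = 0 -> 0 < v m -> (forall k, (k < m)%N -> v k.+1 <= v k + d) ->
  exists k, [/\ (0 < k <= m)%N, 0 < v k & v k <= d].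
Proof.
move=> v0 vm step; have ex_pos : exists k, 0 < v k by exists m.
case: (ex_minnP ex_pos) => -[|k] vk_pos k_min; first by rewrite v0 ltxx in vk_pos.
have km : (k < m)%N by apply: k_min.
have vk : v k <= 0 by rewrite leNgt; apply/negP => /k_min; rewrite ltnn.
by exists k.+1; split => //; have := step k km; lra.
Qed.

Lemma int_walk_crosses (D : nat -> int) lo hi b : (lo <= hi)%N ->
  (forall t, (lo <= t < hi)%N -> `|D t.+1 - D t| <= 1) ->
  (D lo <= b <= D hi) || (D hi <= b <= D lo) -> exists2 t, (lo <= t <= hi)%N & D t = b.
Proof.
move=> lohi step.
wlog /andP [lo_b b_hi] : D b step / D lo <= b <= D hi.
  move=> up /orP [b_up | b_down]; first by apply: up; rewrite ?b_up.
  have stepN t : (lo <= t < hi)%N -> `|- D t.+1 - - D t| <= 1.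
    by rewrite -opprD normrN; apply: step.
  have b_upN : - D lo <= - b <= - D hi by rewrite !lerN2 andbC.
  have [|t t_lohi /oppr_inj Dt] := up (fun t => - D t) (- b) stepN b_upN; first by rewrite b_upN.
  by exists t.
move=> _.
have ex_above : exists t, (lo <= t)%N && (b <= D t) by exists hi; rewrite lohi b_hi.
case: (ex_minnP ex_above) => t /andP [lo_t b_Dt] t_min.
have t_hi : (t <= hi)%N by apply: t_min; rewrite lohi b_hi.
exists t; first by rewrite lo_t t_hi.
have [t_lo | t_neq_lo] := eqVneq t lo; first by subst t; lia.
case: t lo_t b_Dt t_min t_hi t_neq_lo => [|t] lo_t b_Dt t_min t_hi t_neq_lo; first lia.
have lo_le_t : (lo <= t)%N by lia.
have Dt_b : D t < b.
  by rewrite ltNge; apply/negP => /(conj lo_le_t) /andP /t_min; rewrite ltnn.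
by have := step t; rewrite lo_le_t t_hi ler_norml => /(_ isT); lia.
Qed.

Lemma int_walk_lipschitz (D : nat -> int) m :
  (forall t, (t < m)%N -> `|D t.+1 - D t| <= 1) ->
  forall t j, (t + j <= m)%N -> `|D (t + j)%N - D t| <= j%:Z.
Proof.
move=> step t; elim=> [|j IH] le_m; first by rewrite addn0 subrr.
have lt_m : (t + j < m)%N by rewrite -addnS.
have := step _ lt_m; have := IH (ltnW lt_m); rewrite addnS !ler_norml; lia.
Qed.

Lemma int_walk_hits_half (D : nat -> int) n m (c : int) : (2 * m <= n)%N ->
  (forall t, (t < n)%N -> `|D t.+1 - D t| <= 1) -> D 0%N = 0 -> D n = 2 * c ->
  m%:Z <= `|c| -> exists2 t, (m <= t <= n - m)%N & D t = c.
Proof.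
move=> two_m step D0 Dn.
have := @int_walk_lipschitz _ _ step 0 m; rewrite add0n D0 subr0 ler_norml => start.
have := @int_walk_lipschitz _ _ step (n - m) m; rewrite subnK ?ler_norml => [finish|]; last lia.
rewrite ler_normr => m_le_c; apply: int_walk_crosses => [|t /andP [_ lt_t]|]; first lia.
  by apply: step; lia.
by have := start ltac:(lia); have := finish ltac:(lia); lia.
Qed.

Section Hypermutation.
Variables (R : realType) (n : nat) (f : {ffun 'I_n -> bool} -> R).
Implicit Types (x : {ffun 'I_n -> bool}) (sg : {perm 'I_n}).

Definition compl x : {ffun 'I_n -> bool} := [ffun i => ~~ x i].

Lemma optimal_lt x y : is_optimal f y -> ~~ is_optimal f x -> f y < f x.
Proof.
move=> /forallP y_opt /forallPn [z]; rewrite -ltNge => fz_lt.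
exact: le_lt_trans (y_opt z) fz_lt.
Qed.

Definition improving_perms x : {set {perm 'I_n}} :=
  [set sg | has (fun k => f (flipped x sg k) < f x) (iota 1 n)].

Lemma flipped_n x sg : flipped x sg n = compl x.
Proof. by apply/ffunP => i; rewrite !ffunE ltn_ord addbT. Qed.

Lemma flipped_compl x sg k : flipped (compl x) sg k = compl (flipped x sg k).
Proof. by apply/ffunP => i; rewrite !ffunE addNb. Qed.

Lemma stop_index_le x sg : (stop_index f x sg <= n)%N.
Proof.
rewrite /stop_index; set P := fun k => _.
have [P_some | P_none] := boolP (has P (iota 1 n)).
  by rewrite nth_iota ?add1n // -[X in (_ < X)%N](size_iota 1 n) -has_find.
by rewrite nth_default // (hasNfind P_none) size_iota.
Qed.

Lemma improving_permsP x sg k :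
  (0 < k <= n)%N -> f (flipped x sg k) < f x -> sg \in improving_perms x.
Proof.
move=> /andP [k_gt0 k_le_n] lt_fx; rewrite inE; apply/hasP; exists k => //.
by rewrite mem_iota k_gt0 add1n ltnS.
Qed.

Lemma hyp_next_lt x sg : sg \in improving_perms x -> f (hyp_next f x sg) < f x.
Proof.
by rewrite inE => /(nth_find n) lt_fx; rewrite /hyp_next /stop_index /= (ltW lt_fx).
Qed.

Hypothesis f_compl : forall x, f (compl x) = f x.

Lemma hyp_next_eq x sg : sg \notin improving_perms x -> f (hyp_next f x sg) = f x.
Proof.
rewrite inE /hyp_next => /hasNfind stop_n.
have -> : stop_index f x sg = n by rewrite /stop_index stop_n nth_default ?size_iota.
by rewrite flipped_n f_compl lexx f_compl.
Qed.

Lemma is_optimal_compl x : is_optimal f (compl x) = is_optimal f x.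
Proof. by rewrite /is_optimal f_compl. Qed.

Lemma improving_perms_compl x : improving_perms (compl x) = improving_perms x.
Proof.
apply/setP => sg; rewrite !inE f_compl.
by apply: eq_has => k; rewrite /= flipped_compl f_compl.
Qed.

Variables (L : finType) (g : L -> R) (lev : {ffun 'I_n -> bool} -> L).
Hypothesis g_lev : forall x, g (lev x) = f x.
Variable K : nat.
Hypothesis improving_perms_large :
  forall x, ~~ is_optimal f x -> (n`! <= K * #|improving_perms x|)%N.

Definition level_rank (v : R) : nat := #|[set l | g l < v]|.

Lemma level_rank_lt x y : f y < f x -> (level_rank (f y) < level_rank (f x))%N.
Proof.
move=> lt_fy_fx; apply/proper_card/properP; split.
  by apply/subsetP => l; rewrite !inE => /lt_trans; apply.
by exists (lev y); rewrite !inE g_lev ?ltxx.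
Qed.

Lemma trunc_time_le_rank k x : trunc_time f k x <= (K * n * level_rank (f x))%:R.
Proof.
elim: k x => [|k IH] x /=; first exact: ler0n.
case: ifP => [_|/negbT x_nonopt]; first exact: ler0n.
set G := (K * n)%N; set r := level_rank (f x).
(* An iteration costs at most [n] evaluations, and an improving one lowers the rank. *)
have cost sg : (stop_index f x sg)%:R + trunc_time f k (hyp_next f x sg)
    <= n%:R + (G * r)%:R - (if sg \in improving_perms x then G%:R else 0).
  rewrite -addrA; apply: lerD; first by rewrite ler_nat stop_index_le.
  apply: le_trans (IH _) _; case: ifP => [sg_imp | /negbT sg_nonimp].
    have rank_lt := level_rank_lt (hyp_next_lt sg_imp).
    by rewrite lerBrDr -natrD ler_nat -mulnSr leq_mul2l rank_lt orbT.
  by rewrite hyp_next_eq // subr0.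
have improve : (n * n`! <= G * #|improving_perms x|)%N.
  by rewrite /G mulnAC [(n * _)%N]mulnC leq_mul2r (improving_perms_large x_nonopt) orbT.
rewrite card_Sn ler_pdivrMl ?ltr0n ?fact_gt0 //.
apply: le_trans (ler_sum _ (fun sg _ => cost sg)) _.
rewrite sumrB sumr_const card_Sn -big_mkcond /= sumr_const lerBlDr.
rewrite -natrD -!mulrnA -natrM -natrD ler_nat.
by rewrite mulnDl (mulnC (G * r)) addnC leq_add2l.
Qed.

Lemma expected_time_trunc_le k : expected_time_trunc f k <= 1 + (K * n * #|L|)%:R.
Proof.
rewrite /expected_time_trunc lerD2l ler_pdivrMl ?ltr0n ?expn_gt0 //.
have trunc_le x : trunc_time f k x <= (K * n * #|L|)%:R.
  by apply: le_trans (trunc_time_le_rank k x) _; rewrite ler_nat leq_mul2l max_card orbT.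
apply: le_trans (ler_sum _ (fun x _ => trunc_le x)) _.
by rewrite sumr_const card_ffun card_bool card_ord mulr_natl.
Qed.

End Hypermutation.

Section PrefixSum.
Variables (V : nmodType) (n : nat) (sg : {perm 'I_n}) (c : 'I_n -> V).

Definition prefix_sum k : V := \sum_(i | ((sg^-1)%g i < k)%N) c i.

Lemma prefix_sum0 : prefix_sum 0 = 0.
Proof. by rewrite /prefix_sum big_pred0. Qed.

Lemma prefix_sum_n : prefix_sum n = \sum_i c i.
Proof. by apply: eq_bigl => i; rewrite ltn_ord. Qed.

Lemma prefix_sumS k (lt_kn : (k < n)%N) :
  prefix_sum k.+1 = prefix_sum k + c (sg (Ordinal lt_kn)).
Proof.
rewrite /prefix_sum (bigD1 (sg (Ordinal lt_kn))) /= ?permK // addrC; congr (_ + _).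
apply: eq_bigl => i; rewrite ltnS -(inj_eq (@perm_inj _ sg^-1%g)) permK -val_eqE /=.
by rewrite andbC -ltn_neqAle.
Qed.

End PrefixSum.

Section Makespan.
Variables (R : realType) (n : nat) (p : 'I_n -> R).
Implicit Types (x : {ffun 'I_n -> bool}) (sg : {perm 'I_n}).

Lemma makespan_compl x : makespan p (compl x) = makespan p x.
Proof.
rewrite /makespan maxC.
by congr Num.max; apply: eq_bigl => i; rewrite ffunE ?negbK.
Qed.

Definition load x : R := \sum_(i | x i) p i.

Definition signed_time x i : R := if x i then p i else - p i.

Lemma load_flipped x sg k :
  load (flipped x sg k) = load x - prefix_sum sg (signed_time x) k.
Proof.
rewrite /load /prefix_sum [LHS]big_mkcond [X in _ = X - _]big_mkcond.
rewrite [X in _ = _ - X]big_mkcond -sumrB; apply: eq_bigr => i _; rewrite /signed_time ffunE.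
by case: (x i); case: (_ < k)%N; rewrite /= ?subr0 ?subrr ?sub0r ?opprK.
Qed.

Hypothesis p_total : \sum_i p i = 1.

Lemma load_compl x : load (compl x) = 1 - load x.
Proof.
rewrite -p_total (bigID (fun i => x i)) /= addrC addrK.
by apply: eq_bigl => i; rewrite ffunE.
Qed.

Lemma makespan_load x : makespan p x = Num.max (load x) (1 - load x).
Proof.
by rewrite /makespan -load_compl; congr Num.max; apply: eq_bigl => i; rewrite ffunE.
Qed.

Lemma prefix_sum_signed_time_n x sg : prefix_sum sg (signed_time x) n = 2 * load x - 1.
Proof.
rewrite prefix_sum_n (bigID (fun i => x i)) /=.
rewrite (eq_bigr p) => [|i xi]; last by rewrite /signed_time xi.
rewrite [X in _ + X](eq_bigr (fun i => - p i)) => [|i]; last by rewrite /signed_time => /negbTE ->.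
have -> : \sum_(i | ~~ x i) - p i = load x - 1.
  by rewrite sumrN -opprB -load_compl; congr (- _); apply: eq_bigl => i; rewrite ffunE.
by rewrite -/(load x); ring.
Qed.

Lemma load_half_optimal x : load x = 1 / 2 -> is_optimal (makespan p) x.
Proof.
move=> half; apply/forallP => y; rewrite !makespan_load half.
rewrite ge_max !le_max; case: (lerP (1 / 2) (load y)) => half_le /=.
  by apply/orP; left; lra.
by apply/andP; split; [lra | apply/orP; right; lra].
Qed.

Lemma makespan_flipped_lt x sg k : 1 / 2 < load x ->
  0 < prefix_sum sg (signed_time x) k < 2 * load x - 1 ->
  makespan p (flipped x sg k) < makespan p x.
Proof.
move=> half_lt /andP [pos lt]; rewrite !makespan_load load_flipped (@max_l _ _ (load x)); last lra.
by rewrite gt_max; apply/andP; split; lra.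
Qed.

Hypothesis p_ge0 : forall i, 0 <= p i.

Lemma improving_perms_all x (c : R) : (forall i, p i <= c) ->
  1 / 2 < load x -> c < 2 * load x - 1 -> improving_perms (makespan p) x = setT.
Proof.
move=> p_le half_lt c_lt; apply/setP => sg; rewrite in_setT.
have step k : (k < n)%N ->
    prefix_sum sg (signed_time x) k.+1 <= prefix_sum sg (signed_time x) k + c.
  move=> lt_kn; rewrite (prefix_sumS _ _ lt_kn) lerD2l /signed_time.
  by case: ifP => _; have := p_le (sg (Ordinal lt_kn)); have := p_ge0 (sg (Ordinal lt_kn)); lra.
have [|k [k_range pos le_c]] := first_positive_le_step (prefix_sum0 _ _) _ step.
  by rewrite prefix_sum_signed_time_n; lra.
by apply: (improving_permsP k_range); apply: makespan_flipped_lt => //; rewrite pos /=; lra.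
Qed.

Lemma card_improving_perms_first x : 1 / 2 < load x -> (0 < n)%N ->
  (#|[set i | x i && (0 < p i < 2 * load x - 1)%R]| * n`!
    <= #|improving_perms (makespan p) x| * n)%N.
Proof.
move=> half_lt n_gt0; pose t0 := Ordinal n_gt0.
have first_improves : [set sg : {perm 'I_n} | sg t0 \in [set i | x i && (0 < p i < 2 * load x - 1)]]
    \subset improving_perms (makespan p) x.
  apply/subsetP => sg; rewrite in_set in_set => /andP [x_sg p_sg].
  apply: (@improving_permsP _ _ _ _ _ 1) => //; apply: makespan_flipped_lt => //.
  by rewrite (prefix_sumS _ _ n_gt0) prefix_sum0 add0r /signed_time x_sg.
have := card_perms_first_in t0 [set i | x i && (0 < p i < 2 * load x - 1)].
rewrite card_ord => /leq_trans; apply; rewrite leq_mul2r.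
by rewrite subset_leq_card ?orbT.
Qed.

End Makespan.

Section Instance.
Variables (R : realType) (s n : nat) (eps : R).
Hypotheses (s_ge2 : (2 <= s)%N) (eps_gt0 : 0 < eps) (eps_lt : eps < 1 / (2 * s%:R - 1)).
Hypothesis n_large : (8 * s * (s + 1) <= n)%N.
Implicit Types (x : {ffun 'I_n -> bool}) (sg : {perm 'I_n}) (i : 'I_n).

Let two_s_le_n : (2 * s <= n)%N. Proof. by nia. Qed.
Let s_le_n : (s <= n)%N. Proof. by nia. Qed.
Let s_ge2R : 2 <= s%:R :> R. Proof. by rewrite ler_nat. Qed.
Let two_s_le_nR : 2 * s%:R <= n%:R :> R. Proof. by rewrite -natrM ler_nat. Qed.

Definition large_time : R := 1 / (2 * s%:R - 1) - eps / (2 * s%:R).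
Definition small_time : R :=
  (s%:R - 1) / (n%:R - s%:R) * (1 / (2 * s%:R - 1) + eps / (2 * (s%:R - 1))).

Lemma large_time_gt : 1 < 2 * s%:R * large_time.
Proof.
have -> : 2 * s%:R * large_time = 1 + (1 / (2 * s%:R - 1) - eps).
  by rewrite /large_time; field; apply/andP; split; apply/eqP; have := s_ge2R; lra.
by have := eps_lt; lra.
Qed.

Lemma large_time_pos : 0 < large_time.
Proof. by have := large_time_gt; have := s_ge2R; nra. Qed.

Lemma small_time_mass : small_time * (n%:R - s%:R) = (1 - 1 / (2 * s%:R - 1) + eps) / 2.
Proof.
have := s_ge2R; have := two_s_le_nR => ? ?.
by rewrite /small_time; field; do ![apply/andP; split]; apply/eqP; lra.
Qed.

Lemma small_time_pos : 0 < small_time.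
Proof.
have := s_ge2R; have := two_s_le_nR => ? ?.
rewrite -(pmulr_lgt0 _ (_ : 0 < n%:R - s%:R)) ?small_time_mass; last by lra.
have u_le : 1 / (2 * s%:R - 1) <= 1 / 3 :> R by rewrite ler_pdivrMr ?mul1r; lra.
by rewrite divr_gt0 //; have := eps_gt0; lra.
Qed.

Lemma total_time : s%:R * large_time + (n%:R - s%:R) * small_time = 1.
Proof.
rewrite [_ * small_time]mulrC small_time_mass /large_time.
by field; apply/andP; split; apply/eqP; have := s_ge2R; lra.
Qed.

Definition margin := (n %/ (4 * s))%N.

Lemma margin_bounds : [/\ (4 * s * margin <= n)%N, (n <= 8 * s * (margin - s))%N,
  (s < margin)%N & (2 * margin <= n)%N].
Proof.
have s4_gt0 : (0 < 4 * s)%N by lia.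
have := divn_eq n (4 * s); have := ltn_pmod n s4_gt0.
rewrite /margin; move: (n %/ _)%N (n %% _)%N => q r r_lt n_eq.
have : (2 * s + 2 <= q)%N by nia.
split; nia.
Qed.

Lemma margin_small_time : margin%:R * small_time <= large_time / 2.
Proof.
have [margin_n _ _ _] := margin_bounds.
have margin_nR : 4 * s%:R * margin%:R <= n%:R :> R by rewrite -!natrM ler_nat.
have mass := small_time_mass; have S_pos := small_time_pos; have L_gt := large_time_gt.
have margin_S : 4 * s%:R * (margin%:R * small_time) <= n%:R * small_time.
  by rewrite mulrA ler_pM2r.
have n_S : n%:R * small_time <= 2 * (small_time * (n%:R - s%:R)).
  by have := two_s_le_nR; nra.
rewrite -(ler_pM2l (_ : 0 < 4 * s%:R)); last by have := s_ge2R; lra.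
by move: n_S; rewrite mass; have := eps_lt; lra.
Qed.

Local Notation p := (ptime n s eps).

Lemma ptime_le_large i : p i <= large_time.
Proof.
rewrite /ptime -/large_time -/small_time; case: ifP => // _.
have [_ _ s_margin _] := margin_bounds.
have : small_time <= margin%:R * small_time.
  by rewrite ler_peMl ?ler1n ?(ltW small_time_pos) //; lia.
by have := margin_small_time; have := large_time_pos; lra.
Qed.

Lemma ptime_ge0 i : 0 <= p i.
Proof.
rewrite /ptime -/large_time -/small_time.
by case: ifP => _; apply: ltW; [exact: large_time_pos | exact: small_time_pos].
Qed.

Definition large_jobs := [set i : 'I_n | (i < s)%N].

Definition nlarge x := #|[set i : 'I_n | x i && (i < s)%N]|.
Definition nsmall x := #|[set i : 'I_n | x i && ~~ (i < s)%N]|.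

Lemma load_counts x :
  load p x = (nlarge x)%:R * large_time + (nsmall x)%:R * small_time.
Proof.
rewrite /load (bigID (fun i : 'I_n => (i < s)%N)) /=.
congr (_ + _); rewrite mulr_natl -sumr_const; apply: eq_big => i; rewrite ?inE //.
  by move=> /andP [_ i_s]; rewrite /ptime i_s.
by move=> /andP [_ /negbTE i_s]; rewrite /ptime i_s.
Qed.

Lemma nlarge_compl x : (nlarge (compl x) + nlarge x)%N = s.
Proof.
rewrite -[RHS](@card_ord_lt n s) //.
rewrite -(cardsID [set i | x i]) addnC; congr (_ + _); apply: eq_card => i;
  by rewrite !inE ?ffunE andbC.
Qed.

Lemma nsmall_compl x : (nsmall (compl x) + nsmall x)%N = (n - s)%N.
Proof.
rewrite -[RHS](@card_ord_ge n (n - s)) ?leq_subr // subKn //.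
rewrite -(cardsID [set i | x i]) addnC; congr (_ + _); apply: eq_card => i;
  by rewrite !inE ?ffunE -leqNgt andbC.
Qed.

Lemma sum_ptime : \sum_i p i = 1.
Proof.
have -> : \sum_i p i = load p [ffun => true] by apply: eq_bigl => i; rewrite ffunE.
have nlarge_true : nlarge [ffun => true] = s.
  by rewrite -[RHS](@card_ord_lt n s) //; apply: eq_card => i; rewrite !inE ffunE.
have nsmall_true : nsmall [ffun => true] = (n - s)%N.
  rewrite -[RHS](@card_ord_ge n (n - s)) ?leq_subr // subKn //.
  by apply: eq_card => i; rewrite !inE ffunE -leqNgt.
by rewrite load_counts nlarge_true nsmall_true natrB // total_time.
Qed.

Definition level x : 'I_s.+1 * 'I_(n - s).+1 := (inord (nlarge x), inord (nsmall x)).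

Definition level_makespan (l : 'I_s.+1 * 'I_(n - s).+1) : R :=
  let t := l.1%:R * large_time + l.2%:R * small_time in Num.max t (1 - t).

Lemma level_makespanE x : level_makespan (level x) = makespan p x.
Proof.
have := nlarge_compl x; have := nsmall_compl x => nsmall_le nlarge_le.
rewrite /level_makespan /= !inordK ?ltnS -?load_counts ?makespan_load //; last by lia.
  exact: sum_ptime.
lia.
Qed.

Hypotheses (s_even : ~~ odd s) (n_even : ~~ odd n).

Definition half_large := (s./2)%N.
Definition half_small := ((n - s)./2)%N.

Let half_large_double : (2 * half_large = s)%N.
Proof. by rewrite mul2n even_halfK. Qed.

Let half_small_double : (2 * half_small)%N = (n - s)%N.
Proof. by rewrite mul2n even_halfK // oddB ?(negbTE s_even) ?(negbTE n_even) //; nia. Qed.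

Lemma load_sub_half x : load p x - 1 / 2 =
  ((nlarge x)%:R - half_large%:R) * large_time + ((nsmall x)%:R - half_small%:R) * small_time.
Proof.
have s_half : s%:R = 2 * half_large%:R :> R by rewrite -natrM half_large_double.
have ns_half : n%:R - s%:R = 2 * half_small%:R :> R by rewrite -natrB // -natrM half_small_double.
have half : half_large%:R * large_time + half_small%:R * small_time = 1 / 2.
  by have := total_time; rewrite ns_half s_half; lra.
by rewrite load_counts -half; ring.
Qed.

Definition large_part x i : R := if (i < s)%N then signed_time p x i else 0.
Definition small_sign x i : int := if (i < s)%N then 0 else if x i then 1 else -1.

Lemma prefix_sum_signed_time_split x sg t :
  prefix_sum sg (signed_time p x) t
  = prefix_sum sg (large_part x) t + small_time * (prefix_sum sg (small_sign x) t)%:~R.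
Proof.
rewrite /prefix_sum rmorph_sum mulr_sumr -big_split; apply: eq_bigr => i _.
rewrite /= /large_part /small_sign /signed_time /ptime -/large_time -/small_time.
case: (i < s)%N; first by rewrite mulr0 addr0.
by case: (x i); rewrite add0r ?mulr1 ?mulrN1.
Qed.

Lemma small_walk_step x sg t : (t < n)%N ->
  `|prefix_sum sg (small_sign x) t.+1 - prefix_sum sg (small_sign x) t| <= 1.
Proof.
move=> lt_tn; rewrite (prefix_sumS _ _ lt_tn) addrC addKr /small_sign.
by case: ifP => _; [|case: ifP].
Qed.

Lemma small_walk_end x sg :
  prefix_sum sg (small_sign x) n = 2 * ((nsmall x)%:Z - half_small%:Z).
Proof.
rewrite prefix_sum_n (bigID (fun i : 'I_n => (i < s)%N)) /= big1 => [|i i_s]; last first.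
  by rewrite /small_sign i_s.
rewrite add0r (bigID (fun i => x i)) /=.
rewrite (eq_bigr (fun=> 1)) => [|i /andP [s_i xi]]; last by rewrite /small_sign (negbTE s_i) xi.
rewrite [X in _ + X](eq_bigr (fun=> -1)) => [|i /andP [s_i /negbTE xi]]; last first.
  by rewrite /small_sign (negbTE s_i) xi.
rewrite !sumr_const mulNrn.
have -> : #|[pred i : 'I_n | ~~ (i < s)%N && x i]| = nsmall x.
  by apply: eq_card => i; rewrite !inE andbC.
have -> : #|[pred i : 'I_n | ~~ (i < s)%N && ~~ x i]| = nsmall (compl x).
  by apply: eq_card => i; rewrite !inE ffunE andbC.
have := nsmall_compl x; have := half_small_double; lia.
Qed.

Definition unbalanced x :=
  ((nsmall x + margin <= half_small) || (half_small + margin <= nsmall x))%N.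

Lemma small_walk_hits x sg : unbalanced x -> exists2 t,
  (margin <= t <= n - margin)%N & prefix_sum sg (small_sign x) t = (nsmall x)%:Z - half_small%:Z.
Proof.
move=> unbal; have [_ _ _ two_margin] := margin_bounds.
apply: int_walk_hits_half two_margin (@small_walk_step x sg) (prefix_sum0 _ _) _ _.
  exact: small_walk_end.
by move: unbal; rewrite /unbalanced ler_normr; lia.
Qed.

Lemma exists_surplus_large x : exists2 A : {set 'I_n}, A \subset large_jobs &
  \sum_(i in A) signed_time p x i = ((nlarge x)%:R - half_large%:R) * large_time.
Proof.
have sum_const (A : {set 'I_n}) c : {in A, forall i, signed_time p x i = c} ->
    \sum_(i in A) signed_time p x i = c *+ #|A|.
  by move=> A_c; rewrite (eq_bigr (fun=> c) A_c) sumr_const.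
have [hl_le | lt_hl] := leqP half_large (nlarge x).
  have [A A_sub A_card] := exists_subset_card (leq_subr half_large (nlarge x)).
  exists A; first by apply: subset_trans A_sub _; apply/subsetP => i; rewrite !inE => /andP [].
  rewrite (@sum_const _ large_time) ?A_card => [|i /(subsetP A_sub)]; last first.
    by rewrite inE /signed_time /ptime => /andP [-> ->].
  by rewrite -[LHS]mulr_natl natrB.
have le_compl : (half_large - nlarge x <= nlarge (compl x))%N.
  by have := nlarge_compl x; have := half_large_double; lia.
have [A A_sub A_card] := exists_subset_card le_compl.
exists A; first by apply: subset_trans A_sub _; apply/subsetP => i; rewrite !inE => /andP [].
rewrite (@sum_const _ (- large_time)) ?A_card => [|i /(subsetP A_sub)]; last first.
  by rewrite inE ffunE /signed_time /ptime => /andP [/negbTE -> ->].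
by rewrite -[LHS]mulr_natl natrB 1?ltnW // mulrN -mulNr opprB.
Qed.

(* The surplus large jobs [A] are flipped within the first [margin] steps and the
   other large jobs within the last [margin] steps; in between only small jobs move. *)
Definition balancing_slots (A : {set 'I_n}) (e : 'I_n) : {set 'I_n} :=
  if e \in A then [set t : 'I_n | (t < margin)%N] else [set t : 'I_n | (n - margin <= t)%N].

Lemma large_part_balanced x (A : {set 'I_n}) sg t : A \subset large_jobs ->
  sg \in constrained_perms (balancing_slots A) (enum large_jobs) ->
  (margin <= t <= n - margin)%N ->
  prefix_sum sg (large_part x) t = \sum_(i in A) signed_time p x i.
Proof.
move=> /subsetP A_large; rewrite inE => /allP sg_slots /andP [margin_t t_margin].
rewrite /prefix_sum big_mkcond [RHS]big_mkcond; apply: eq_bigr => i _.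
rewrite /large_part; have [i_s | s_i] := boolP (i < s)%N; last first.
  have iA : i \notin A by apply: contraNN s_i => /A_large; rewrite inE.
  by rewrite (negbTE iA); case: ifP.
have := sg_slots i; rewrite mem_enum inE i_s /balancing_slots => /(_ isT).
case: ifP => _; rewrite inE => slot; first by rewrite (leq_trans slot margin_t).
by rewrite ltnNge (leq_trans t_margin slot).
Qed.

Lemma balancing_perms_improving x (A : {set 'I_n}) :
  ~~ is_optimal (makespan p) x -> unbalanced x -> A \subset large_jobs ->
  \sum_(i in A) signed_time p x i = ((nlarge x)%:R - half_large%:R) * large_time ->
  constrained_perms (balancing_slots A) (enum large_jobs) \subset improving_perms (makespan p) x.
Proof.
move=> x_nonopt unbal A_large A_sum; apply/subsetP => sg sg_bal.
have [t t_range walk_t] := small_walk_hits sg unbal.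
have [_ _ s_margin _] := margin_bounds.
apply: (@improving_permsP _ _ _ _ _ t).
  move: t_range => /andP [margin_t t_le].
  by rewrite (leq_trans _ margin_t) ?(leq_trans t_le (leq_subr _ _)) // (leq_ltn_trans _ s_margin).
apply: optimal_lt x_nonopt; apply: load_half_optimal; first exact: sum_ptime.
rewrite load_flipped prefix_sum_signed_time_split (large_part_balanced _ A_large sg_bal t_range).
by rewrite A_sum walk_t intrB /= -[load p x](subrK (1 / 2)) load_sub_half; ring.
Qed.

Lemma card_balancing_perms (A : {set 'I_n}) :
  (n`! <= (8 * s) ^ s * #|constrained_perms (balancing_slots A) (enum large_jobs)|)%N.
Proof.
have [margin_n n_margin s_margin _] := margin_bounds.
have margin_le : (margin <= n)%N by nia.
have slots e : e \in enum large_jobs -> (margin <= #|balancing_slots A e|)%N.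
  by rewrite /balancing_slots; case: ifP => _; rewrite ?card_ord_lt ?card_ord_ge.
have := card_constrained_perms (enum_uniq (mem large_jobs)) slots.
rewrite card_ord -cardE card_ord_lt; last by nia.
have n_pow : (n ^ s <= (8 * s) ^ s * (margin.+1 - s) ^ s)%N.
  by rewrite -expnMn leq_exp2r; nia.
move=> count; rewrite -(@leq_pmul2r (n ^ s)) ?expn_gt0; last by nia.
apply: leq_trans (leq_mul (leqnn _) n_pow) _.
by rewrite mulnCA -mulnA leq_mul2l count orbT.
Qed.

Lemma card_improving_perms_unbalanced x : ~~ is_optimal (makespan p) x -> unbalanced x ->
  (n`! <= (8 * s) ^ s * #|improving_perms (makespan p) x|)%N.
Proof.
move=> x_nonopt unbal; have [A A_large A_sum] := exists_surplus_large x.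
apply: leq_trans (card_balancing_perms A) _; rewrite leq_mul2l subset_leq_card ?orbT //.
exact: balancing_perms_improving.
Qed.

Lemma n_le_four_nsmall x : (half_small < nsmall x)%N -> (n <= 4 * nsmall x)%N.
Proof. by have := half_small_double; have := two_s_le_n; lia. Qed.

Lemma balanced_excess x : 1 / 2 < load p x -> 2 * load p x - 1 <= large_time ->
  ~~ unbalanced x -> (half_small < nsmall x)%N /\ small_time < 2 * load p x - 1.
Proof.
move=> half_lt excess_le; rewrite negb_or -!ltnNge => /andP [hs_lt ns_lt].
have S_pos := small_time_pos; have L_pos := large_time_pos.
have margin_S := margin_small_time.
have := load_sub_half x; set a := _%:R - _%:R; set b := _%:R - _%:R => load_half.
have b_bounds : - (large_time / 2) < b * small_time < large_time / 2.
  have : (nsmall x)%:R < (half_small + margin)%:R :> R by rewrite ltr_nat.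
  have : half_small%:R < (nsmall x + margin)%:R :> R by rewrite ltr_nat.
  rewrite !natrD => lt1 lt2.
  have : b * small_time < margin%:R * small_time by rewrite ltr_pM2r // /b; lra.
  have : - margin%:R * small_time < b * small_time by rewrite ltr_pM2r // /b; lra.
  by lra.
have nlarge_eq : nlarge x = half_large.
  case: (ltngtP (nlarge x) half_large) => // [lt_hl | hl_lt].
    have : a <= - 1 by rewrite /a -opprB lerN2 lerBrDr addrC natr1 ler_nat.
    by move=> /(ler_wpM2r (ltW L_pos)); rewrite mulN1r => aL; exfalso; lra.
  have : 1 <= a by rewrite /a lerBrDr addrC natr1 ler_nat.
  by move=> /(ler_wpM2r (ltW L_pos)); rewrite mul1r => aL; exfalso; lra.
rewrite /a nlarge_eq subrr mul0r add0r in load_half.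
have hh_lt : (half_small < nsmall x)%N.
  have : 0 < b by rewrite -(pmulr_lgt0 _ S_pos); lra.
  by rewrite /b subr_gt0 ltr_nat.
split=> //; have : 1 <= b by rewrite /b lerBrDr addrC natr1 ler_nat.
by move=> /(ler_wpM2r (ltW S_pos)); rewrite mul1r; lra.
Qed.

Lemma card_improving_perms_balanced x : 1 / 2 < load p x ->
  2 * load p x - 1 <= large_time -> ~~ unbalanced x ->
  (n`! <= 4 * #|improving_perms (makespan p) x|)%N.
Proof.
move=> half_lt excess_le bal; have [hh_lt S_lt] := balanced_excess half_lt excess_le bal.
have n_gt0 : (0 < n)%N := leq_trans (ltnW s_ge2) s_le_n.
have small_first : [set i | x i && ~~ (i < s)%N]
    \subset [set i | x i && (0 < p i < 2 * load p x - 1)%R].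
  apply/subsetP => i; rewrite !inE /ptime -/large_time -/small_time.
  by move=> /andP [-> /negbTE ->]; rewrite small_time_pos S_lt.
have first := card_improving_perms_first sum_ptime half_lt n_gt0.
have := subset_leq_card small_first; rewrite -/(nsmall x) => le_first.
rewrite -(leq_pmul2r n_gt0) -mulnA; apply: leq_trans (leq_mul (leqnn 4) first).
rewrite mulnA [(n`! * n)%N]mulnC leq_mul2r; apply/orP; right.
by apply: leq_trans (n_le_four_nsmall hh_lt) _; rewrite leq_mul2l le_first orbT.
Qed.

Lemma card_improving_perms x : ~~ is_optimal (makespan p) x ->
  (n`! <= (8 * s) ^ s * #|improving_perms (makespan p) x|)%N.
Proof.
have f_compl := makespan_compl p.
wlog half_lt : x / 1 / 2 < load p x => [gen x_nonopt | x_nonopt].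
  have load_ne : load p x != 1 / 2.
    by apply: contraNneq x_nonopt => /(load_half_optimal sum_ptime).
  have [lt_half|le_half] := ltrP (1 / 2) (load p x); first exact: gen lt_half x_nonopt.
  rewrite -(improving_perms_compl f_compl); apply: gen; last by rewrite is_optimal_compl.
  by rewrite (load_compl sum_ptime); move: le_half; rewrite le_eqVlt (negbTE load_ne) /=; lra.
have four_le : (4 <= (8 * s) ^ s)%N.
  apply: leq_trans (leq_pexp2l _ (ltnW s_ge2)); rewrite ?muln_gt0 ?(ltnW s_ge2) //.
  by rewrite expn1 (leq_trans _ (leq_pmulr 8 _)) ?(ltnW s_ge2).
have [excess_gt | excess_le] := ltrP large_time (2 * load p x - 1).
  rewrite (improving_perms_all sum_ptime ptime_ge0 ptime_le_large half_lt excess_gt).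
  by rewrite cardsT card_Sn leq_pmull // expn_gt0 muln_gt0 (ltnW s_ge2).
have [unbal | bal] := boolP (unbalanced x); first exact: card_improving_perms_unbalanced.
apply: leq_trans (card_improving_perms_balanced half_lt excess_le bal) _.
by rewrite leq_mul2r four_le orbT.
Qed.

Lemma expected_time_ptime k : expected_time_trunc (makespan p) k
  <= 1 + ((8 * s) ^ s * n * (s.+1 * (n - s).+1))%:R.
Proof.
have := expected_time_trunc_le (makespan_compl p) level_makespanE card_improving_perms k.
by rewrite card_prod !card_ord.
Qed.

End Instance.

Theorem theorem4 (R : realType) (s : nat) (eps : R) :
  (2 <= s)%N -> ~~ odd s -> 0 < eps -> eps < 1 / (2 * s%:R - 1) ->
  exists C : R, exists n0 : nat,
    forall n : nat, (n0 <= n)%N -> ~~ odd n ->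
      forall k : nat,
        expected_time_trunc (makespan (ptime n s eps)) k <= C * (n%:R) ^+ 2.
Proof.
move=> s_ge2 s_even eps_gt0 eps_lt.
exists (1 + 2 * (8 * s) ^ s * s.+1)%N%:R, (8 * s * (s + 1))%N => n n_large n_even k.
apply: le_trans (expected_time_ptime s_ge2 eps_gt0 eps_lt n_large s_even n_even k) _.
rewrite nat1r -natrX -natrM ler_nat.
move: ((8 * s) ^ s)%N => K; nia.
Qed.
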